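(* Let $N,M\ge1$, $h_1,h_2>0$, $\varepsilon>0$, and set $\lambda_1=e^{-h_1/\varepsilon}$, $\lambda_2=e^{-h_2/\varepsilon}$. Let $K_0\in\mathbb{R}^{N\times N}$ have entries $(K_0)_{ij}=\lambda_1^{|i-j|}$ and let $K\in\mathbb{R}^{NM\times NM}$ be the block matrix whose $(a,b)$ block ($a,b=1,\dots,M$) is $\lambda_2^{|a-b|}K_0$. For $\boldsymbol{\psi}\in\mathbb{R}^{NM}$ written in blocks $\boldsymbol{\psi}=(\boldsymbol{\psi}_1;\dots;\boldsymbol{\psi}_M)$ with $\boldsymbol{\psi}_i\in\mathbb{R}^N$, define $$\boldsymbol{p}_1=K_0\boldsymbol{\psi}_1,\quad \boldsymbol{p}_{k+1}=\lambda_2\boldsymbol{p}_k+K_0\boldsymbol{\psi}_{k+1}\ (k=1,\dots,M-1),$$ $$\boldsymbol{q}_M=\mathbf{0}_N,\quad \boldsymbol{q}_k=\lambda_2(\boldsymbol{q}_{k+1}+K_0\boldsymbol{\psi}_{k+1})\ (k=M-1,\dots,1).$$ Then the $k$-th block of $K\boldsymbol{\psi}$ equals $\boldsymbol{p}_k+\boldsymbol{q}_k$ for each $k=1,\dots,M$, and, computing each product $K_0\boldsymbol{\psi}_i$ by the linear-time recursion $r_1=\psi_{1},\ r_{j+1}=\lambda_1 r_j+\psi_{j+1}$, $s_N=0,\ s_j=\lambda_1(s_{j+1}+\psi_{j+1})$, $(K_0\boldsymbol{\psi}_i)_j=r_j+s_j$, the product $K\boldsymbol{\psi}$ can be computed exactly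 with $O(NM)$ arithmetic operations.
   Context: $K$ is the Sinkhorn kernel for the entropy-regularized discrete 2D Wasserstein-1 problem on a uniform $N\times M$ grid with spacings $h_1,h_2$ (cost $|i_1-i_2|h_1+|j_1-j_2|h_2$, regularization $\varepsilon\sum\Gamma\ln\Gamma$), with distributions flattened in column-major order, so $K_{(i_1,j_1),(i_2,j_2)}=\lambda_1^{|i_1-i_2|}\lambda_2^{|j_1-j_2|}$. *)

From HB Require Import structures.
From mathcomp Require Import all_boot all_order all_algebra.
From mathcomp Require Import reals.
From mathcomp Require Import sequences exp.
Set Implicit Arguments. Unset Strict Implicit. Unset Printing Implicit Defensive.
Import Order.TTheory GRing.Theory Num.Theory.
Local Open Scope ring_scope.

Definition ndist (a b : nat) : nat := ((a - b) + (b - a))%N.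

(* Matrices.  N = n.+1, M = m.+1 (so N, M >= 1).  Indices are 0-based. *)

Definition K0mx (R : nzRingType) (n : nat) (lam1 : R) : 'M[R]_n.+1 :=
  \matrix_(i, j) lam1 ^+ ndist i j.

(* Flat index x : 'I_(M*N) corresponds to block a = x %/ N, row i = x %% N
   (x = a*N + i, i.e. column-major flattening of an N x M grid). *)
Definition Kmx (R : nzRingType) (n m : nat) (lam1 lam2 : R) : 'M[R]_(m.+1 * n.+1) :=
  \matrix_(x, y) (lam2 ^+ ndist (x %/ n.+1) (y %/ n.+1)
                   * K0mx n lam1 (inord (x %% n.+1)) (inord (y %% n.+1))).

(* k-th block (0-based, k : nat, k <= m) of psi : R^{NM}; entry i is the
   flat index k*N + i = mxvec_index k i. *)
Definition psiblk (R : nzRingType) (n m : nat) (psi : 'cV[R]_(m.+1 * n.+1))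
  (k : nat) : 'cV[R]_n.+1 :=
  \col_i psi (mxvec_index (inord k : 'I_m.+1) i) 0.

Fixpoint pvec (R : nzRingType) (n m : nat) (lam1 lam2 : R)
  (psi : 'cV[R]_(m.+1 * n.+1)) (k : nat) : 'cV[R]_n.+1 :=
  match k with
  | 0 => K0mx n lam1 *m psiblk psi 0
  | k'.+1 => lam2 *: pvec lam1 lam2 psi k' + K0mx n lam1 *m psiblk psi k'.+1
  end.

(* backward helper: qaux d = q_{M-d} (0-based: q at index m - d) *)
Fixpoint qaux (R : nzRingType) (n m : nat) (lam1 lam2 : R)
  (psi : 'cV[R]_(m.+1 * n.+1)) (d : nat) : 'cV[R]_n.+1 :=
  match d with
  | 0 => 0
  | d'.+1 => lam2 *: (qaux lam1 lam2 psi d' + K0mx n lam1 *m psiblk psi (m - d'))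
  end.

Definition qvec (R : nzRingType) (n m : nat) (lam1 lam2 : R)
  (psi : 'cV[R]_(m.+1 * n.+1)) (k : nat) : 'cV[R]_n.+1 :=
  qaux lam1 lam2 psi (m - k).

Fixpoint rrec (R : nzRingType) (n : nat) (lam1 : R) (v : 'cV[R]_n.+1) (j : nat) : R :=
  match j with
  | 0 => v (inord 0) 0
  | j'.+1 => lam1 * rrec lam1 v j' + v (inord j'.+1) 0
  end.

Fixpoint saux (R : nzRingType) (n : nat) (lam1 : R) (v : 'cV[R]_n.+1) (d : nat) : R :=
  match d with
  | 0 => 0
  | d'.+1 => lam1 * (saux lam1 v d' + v (inord (n - d')) 0)
  end.

Definition srec (R : nzRingType) (n : nat) (lam1 : R) (v : 'cV[R]_n.+1) (j : nat) : R :=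
  saux lam1 v (n - j).

(* Operation-counting model: a computation returns (result, #ops).    *)
Definition Cost (A : Type) : Type := (A * nat)%type.
Definition cret (A : Type) (a : A) : Cost A := (a, 0%N).
Definition cbind (A B : Type) (c : Cost A) (f : A -> Cost B) : Cost B :=
  let: (a, k) := c in let: (b, l) := f a in (b, (k + l)%N).
Definition cadd (R : nzRingType) (x y : R) : Cost R := (x + y, 1%N).
Definition cmul (R : nzRingType) (x y : R) : Cost R := (x * y, 1%N).

Fixpoint vaddC (R : nzRingType) (a b : seq R) : Cost (seq R) :=
  match a, b with
  | x :: a', y :: b' =>
      cbind (cadd x y) (fun z => cbind (vaddC a' b') (fun zs => cret (z :: zs)))
  | _, _ => cret [::]
  end.

Fixpoint vscaleC (R : nzRingType) (l : R) (a : seq R) : Cost (seq R) :=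
  match a with
  | x :: a' => cbind (cmul l x) (fun z => cbind (vscaleC l a') (fun zs => cret (z :: zs)))
  | [::] => cret [::]
  end.

Fixpoint fwdC (R : nzRingType) (l prev : R) (v : seq R) : Cost (seq R) :=
  match v with
  | x :: v' =>
      cbind (cmul l prev) (fun a => cbind (cadd a x) (fun r =>
        cbind (fwdC l r v') (fun rs => cret (r :: rs))))
  | [::] => cret [::]
  end.

Definition rC (R : nzRingType) (l : R) (v : seq R) : Cost (seq R) :=
  match v with
  | x :: v' => cbind (fwdC l x v') (fun rs => cret (x :: rs))
  | [::] => cret [::]
  end.

Fixpoint sC (R : nzRingType) (l : R) (v : seq R) : Cost (seq R) :=
  match v with
  | [::] => cret [::]
  | [:: _] => cret [:: 0]
  | _ :: ((y :: _) as v') =>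
      cbind (sC l v') (fun ss =>
        cbind (cadd (head 0 ss) y) (fun t =>
          cbind (cmul l t) (fun s => cret (s :: ss))))
  end.

Definition fastK0 (R : nzRingType) (l1 : R) (v : seq R) : Cost (seq R) :=
  cbind (rC l1 v) (fun r => cbind (sC l1 v) (fun s => vaddC r s)).

Fixpoint mapC (A B : Type) (f : A -> Cost B) (s : seq A) : Cost (seq B) :=
  match s with
  | x :: s' => cbind (f x) (fun y => cbind (mapC f s') (fun ys => cret (y :: ys)))
  | [::] => cret [::]
  end.

Fixpoint pfwdC (R : nzRingType) (l2 : R) (prev : seq R) (us : seq (seq R))
  : Cost (seq (seq R)) :=
  match us with
  | u :: us' =>
      cbind (vscaleC l2 prev) (fun a => cbind (vaddC a u) (fun p =>
        cbind (pfwdC l2 p us') (fun ps => cret (p :: ps))))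
  | [::] => cret [::]
  end.

Definition pC (R : nzRingType) (l2 : R) (us : seq (seq R)) : Cost (seq (seq R)) :=
  match us with
  | u :: us' => cbind (pfwdC l2 u us') (fun ps => cret (u :: ps))
  | [::] => cret [::]
  end.

Fixpoint qC (R : nzRingType) (nN : nat) (l2 : R) (us : seq (seq R))
  : Cost (seq (seq R)) :=
  match us with
  | [::] => cret [::]
  | [:: _] => cret [:: nseq nN 0]
  | _ :: ((u :: _) as us') =>
      cbind (qC nN l2 us') (fun qs =>
        cbind (vaddC (head [::] qs) u) (fun t =>
          cbind (vscaleC l2 t) (fun q => cret (q :: qs))))
  end.

Fixpoint vvaddC (R : nzRingType) (a b : seq (seq R)) : Cost (seq (seq R)) :=
  match a, b with
  | x :: a', y :: b' =>
      cbind (vaddC x y) (fun z => cbind (vvaddC a' b') (fun zs => cret (z :: zs)))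
  | _, _ => cret [::]
  end.

Definition fastK (R : nzRingType) (nN : nat) (l1 l2 : R) (blocks : seq (seq R))
  : Cost (seq R) :=
  cbind (mapC (fastK0 l1) blocks) (fun us =>
    cbind (pC l2 us) (fun ps =>
      cbind (qC nN l2 us) (fun qs =>
        cbind (vvaddC ps qs) (fun bs => cret (flatten bs))))).

Definition psiblocks (R : nzRingType) (n m : nat) (psi : 'cV[R]_(m.+1 * n.+1))
  : seq (seq R) :=
  [seq [seq psi (mxvec_index k i) 0 | i <- enum 'I_n.+1] | k <- enum 'I_m.+1].

Definition colseq (R : nzRingType) (p : nat) (v : 'cV[R]_p) : seq R :=
  [seq v x 0 | x <- enum 'I_p].

From HB Require Import structures.
From mathcomp Require Import all_boot all_order all_algebra.
From mathcomp Require Import reals.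
From mathcomp Require Import sequences exp.
From mathcomp Require Import zify.

(* K0 and K are both distance kernels u |-> (\sum_b l ^ |k - b| u_b)_k: K0 acts so on
   the entries of a vector, and K acts so, with l = lam2, on the blocks K0 psi_b.
   Splitting the sum at b = k leaves a causal part (b <= k) and an anticausal part
   (b > k), which obey f_(k+1) = l f_k + u_(k+1) and g_k = l (g_(k+1) + u_(k+1)).
   These recursions cost two operations per entry: 5N - 4 operations for each product
   K0 psi_b (including the sum r + s), 2N per step of p and of q, and NM for the final
   sum p + q, hence fewer than 10 NM operations in all. *)

Set Implicit Arguments.
Unset Strict Implicit.
Unset Printing Implicit Defensive.
Import Order.TTheory GRing.Theory Num.Theory.
Local Open Scope ring_scope.

Section DistanceKernel.
Variables (R : pzRingType) (V : lmodType R) (l : R) (u : nat -> V).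

Lemma causal_recE (f : nat -> V) :
  f 0%N = u 0%N -> (forall k, f k.+1 = l *: f k + u k.+1) ->
  forall k, f k = \sum_(0 <= b < k.+1) l ^+ (k - b) *: u b.
Proof.
move=> f0 fS; elim=> [|k IH]; first by rewrite big_nat1 expr0 scale1r.
rewrite fS IH [RHS]big_nat_recr //= subnn expr0 scale1r scaler_sumr; congr (_ + _).
apply: eq_big_nat => b /andP[_ hb]; rewrite scalerA -exprS; congr (_ ^+ _ *: _); lia.
Qed.

Lemma anticausal_recE m (g : nat -> V) :
  g m = 0 -> (forall k, (k < m)%N -> g k = l *: (g k.+1 + u k.+1)) ->
  forall k, (k <= m)%N -> g k = \sum_(k.+1 <= b < m.+1) l ^+ (b - k) *: u b.
Proof.
move=> gm gS k km; have := subnKC km; move: (m - k)%N => d.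
elim: d k {km} => [|d IH] k hkd.
  by rewrite addn0 in hkd; rewrite hkd gm big_geq.
rewrite gS ?IH; [|lia|lia]; rewrite (@big_ltn _ _ _ k.+1) ?ltnS; last lia.
rewrite scalerDr scaler_sumr addrC subSn // subnn expr1; congr (_ + _).
by apply: eq_big_nat => b /andP[hb _]; rewrite scalerA -exprS; congr (_ ^+ _ *: _); lia.
Qed.

Lemma sum_ndist_split m k : (k <= m)%N ->
  \sum_(b < m.+1) l ^+ ndist k b *: u b =
  \sum_(0 <= b < k.+1) l ^+ (k - b) *: u b + \sum_(k.+1 <= b < m.+1) l ^+ (b - k) *: u b.
Proof.
move=> km; rewrite -(big_mkord xpredT (fun b => l ^+ ndist k b *: u b)).
rewrite (big_cat_nat _ (n := k.+1)) //=.
by congr (_ + _); apply: eq_big_nat => b /andP[hb1 hb2]; rewrite /ndist; congr (_ ^+ _ *: _); lia.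
Qed.

Lemma distance_kernel_recE m (f g : nat -> V) k :
  f 0%N = u 0%N -> (forall k, f k.+1 = l *: f k + u k.+1) ->
  g m = 0 -> (forall k, (k < m)%N -> g k = l *: (g k.+1 + u k.+1)) ->
  (k <= m)%N -> \sum_(b < m.+1) l ^+ ndist k b *: u b = f k + g k.
Proof.
move=> f0 fS gm gS km.
by rewrite sum_ndist_split // (causal_recE f0 fS) (anticausal_recE gm gS km).
Qed.

End DistanceKernel.

Section OperationCounts.
Variable R : nzRingType.

Lemma vaddC_map (T : Type) (s : seq T) (f g : T -> R) :
  vaddC [seq f j | j <- s] [seq g j | j <- s] = ([seq f j + g j | j <- s], size s).
Proof. by elim: s => //= x s ->; rewrite /= addn0 add1n. Qed.

Lemma vscaleC_map (T : Type) (s : seq T) (l : R) (f : T -> R) :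
  vscaleC l [seq f j | j <- s] = ([seq l * f j | j <- s], size s).
Proof. by elim: s => //= x s ->; rewrite /= addn0 add1n. Qed.

Lemma vvaddC_map (T1 T2 : Type) (t : seq T1) (s : seq T2) (f g : T1 -> T2 -> R) :
  vvaddC [seq [seq f k j | j <- s] | k <- t] [seq [seq g k j | j <- s] | k <- t]
  = ([seq [seq f k j + g k j | j <- s] | k <- t], (size t * size s)%N).
Proof. by elim: t => //= k t IH; rewrite vaddC_map /= IH /=; congr (_, _); lia. Qed.

Lemma mapC_map (A B T : Type) (t : seq T) (f : A -> Cost B) (g : T -> A) (h : T -> B) c :
  (forall k, f (g k) = (h k, c)) ->
  mapC f [seq g k | k <- t] = ([seq h k | k <- t], (size t * c)%N).
Proof. by move=> fg; elim: t => //= k t IH; rewrite fg /= IH /=; congr (_, _); lia. Qed.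

Section ScalarRecursions.
Variables (l : R) (x : nat -> R).

Lemma fwdCE (f : nat -> R) a c : (forall j, f j.+1 = l * f j + x j.+1) ->
  fwdC l (f a) [seq x j | j <- iota a.+1 c] = ([seq f j | j <- iota a.+1 c], (2 * c)%N).
Proof. by move=> fS; elim: c a => [|c IH] a //=; rewrite -fS IH /=; congr (_, _); lia. Qed.

Lemma rCE (f : nat -> R) c : f 0%N = x 0%N -> (forall j, f j.+1 = l * f j + x j.+1) ->
  rC l [seq x j | j <- iota 0 c.+1] = ([seq f j | j <- iota 0 c.+1], (2 * c)%N).
Proof. by move=> f0 fS; rewrite /= -f0 fwdCE //= addn0. Qed.

Lemma sCE (g : nat -> R) a c :
  g (a + c)%N = 0 -> (forall j, (j < a + c)%N -> g j = l * (g j.+1 + x j.+1)) ->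
  sC l [seq x j | j <- iota a c.+1] = ([seq g j | j <- iota a c.+1], (2 * c)%N).
Proof.
elim: c a => [|c IH] a gl gS; first by rewrite /= -gl addn0.
have := IH a.+1; rewrite addSnnS => /(_ gl gS) /= ->.
by rewrite /= -gS; [congr (_, _); lia | lia].
Qed.

End ScalarRecursions.

Section BlockRecursions.
Variables (l : R) (T : Type) (s : seq T) (u : nat -> T -> R).

Lemma pfwdCE (p : nat -> T -> R) a c : (forall k j, p k.+1 j = l * p k j + u k.+1 j) ->
  pfwdC l [seq p a j | j <- s] [seq [seq u k j | j <- s] | k <- iota a.+1 c]
  = ([seq [seq p k j | j <- s] | k <- iota a.+1 c], (c * (2 * size s))%N).
Proof.
move=> pS; elim: c a => [|c IH] a //=.
rewrite vscaleC_map /= vaddC_map /=.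
have -> : [seq l * p a j + u a.+1 j | j <- s] = [seq p a.+1 j | j <- s].
  by apply: eq_map => j; rewrite pS.
by rewrite IH /=; congr (_, _); lia.
Qed.

Lemma pCE (p : nat -> T -> R) c :
  (forall j, p 0%N j = u 0%N j) -> (forall k j, p k.+1 j = l * p k j + u k.+1 j) ->
  pC l [seq [seq u k j | j <- s] | k <- iota 0 c.+1]
  = ([seq [seq p k j | j <- s] | k <- iota 0 c.+1], (c * (2 * size s))%N).
Proof.
move=> p0 pS; rewrite /= -(eq_map p0) pfwdCE //=; congr (_, _); lia.
Qed.

Lemma qCE (q : nat -> T -> R) a c :
  (forall j, q (a + c)%N j = 0) ->
  (forall k j, (k < a + c)%N -> q k j = l * (q k.+1 j + u k.+1 j)) ->
  qC (size s) l [seq [seq u k j | j <- s] | k <- iota a c.+1]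
  = ([seq [seq q k j | j <- s] | k <- iota a c.+1], (c * (2 * size s))%N).
Proof.
elim: c a => [|c IH] a ql qS.
  have qa0 j : q a j = 0 by rewrite -(ql j) addn0.
  by congr ([:: _], _); elim: s => //= j t ->; rewrite qa0.
have := IH a.+1; rewrite addSnnS => /(_ ql qS) /= ->.
rewrite /= vaddC_map /= vscaleC_map /=.
have -> : [seq l * (q a.+1 j + u a.+1 j) | j <- s] = [seq q a j | j <- s].
  by apply: eq_map => j; rewrite [in RHS]qS //; lia.
by congr (_, _); lia.
Qed.

End BlockRecursions.

End OperationCounts.

Lemma index_allpairs (T1 T2 : eqType) (s1 : seq T1) (s2 : seq T2) i j :
  uniq s1 -> i \in s1 -> j \in s2 ->
  index (i, j) [seq (x, y) | x <- s1, y <- s2] = (index i s1 * size s2 + index j s2)%N.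
Proof.
elim: s1 => //= x s1 IH /andP[xs1 u1]; rewrite inE => /orP[/eqP->|is1] js2.
  rewrite index_cat /= eqxx /= mul0n add0n.
  have -> : (x, j) \in [seq (x, y) | y <- s2] by apply: map_f.
  by rewrite (index_map (fun a b (e : (x, a) = (x, b)) => f_equal snd e)).
rewrite index_cat.
have xi : (x == i) = false by apply/negbTE/eqP => e; rewrite e is1 in xs1.
have -> : ((i, j) \in [seq (x, y) | y <- s2]) = false.
  by apply/negbTE/negP => /mapP[y _ [e _]]; rewrite e eqxx in xi.
by rewrite size_map IH // xi mulSn addnA.
Qed.

Lemma val_enum_rank (T : finType) (x : T) : val (enum_rank x) = index x (enum T).
Proof. by rewrite -{2}(nth_enum_rank x x) index_uniq ?enum_uniq // -cardE ltn_ord. Qed.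

Lemma val_mxvec_index p q (i : 'I_p) (j : 'I_q) : mxvec_index i j = (i * q + j)%N :> nat.
Proof.
rewrite /mxvec_index /= val_enum_rank enumT unlock /= /prod_enum.
by rewrite index_allpairs ?enum_uniq ?mem_enum // !index_enum_ord size_enum_ord.
Qed.

Section K0Product.
Variables (R : nzRingType) (n : nat) (l : R) (v : 'cV[R]_n.+1).

Lemma mulmx_K0mxE (j : 'I_n.+1) :
  (K0mx n l *m v) j 0 = \sum_(i < n.+1) l ^+ ndist j i *: (v (inord i) 0 : R^o).
Proof. by rewrite mxE; apply: eq_bigr => i _; rewrite mxE inord_val. Qed.

Lemma srec_last : srec l v n = 0.
Proof. by rewrite /srec subnn. Qed.

Lemma srecS j : (j < n)%N -> srec l v j = l * (srec l v j.+1 + v (inord j.+1) 0).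
Proof. by move=> jn; rewrite /srec -(subnSK jn) /= subKn. Qed.

Lemma mulmx_K0mx_rs (j : 'I_n.+1) : (K0mx n l *m v) j 0 = rrec l v j + srec l v j.
Proof.
rewrite mulmx_K0mxE.
apply: (@distance_kernel_recE _ R^o _ (fun i => v (inord i) 0) n (rrec l v)) => //.
- exact: srec_last.
- exact: srecS.
- by rewrite -ltnS.
Qed.

Lemma fastK0E :
  fastK0 l [seq v (inord j) 0 | j <- iota 0 n.+1]
  = ([seq (K0mx n l *m v) (inord j) 0 | j <- iota 0 n.+1], (5 * n).+1).
Proof.
have rsE : [seq rrec l v j + srec l v j | j <- iota 0 n.+1]
         = [seq (K0mx n l *m v) (inord j) 0 | j <- iota 0 n.+1].
  by apply/eq_in_map => j; rewrite mem_iota => /andP[_ jn]; rewrite mulmx_K0mx_rs inordK.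
rewrite /fastK0 (@rCE _ _ _ (rrec l v)) // (@sCE _ _ _ (srec l v) 0 n); first last.
- by move=> j jn; rewrite srecS.
- exact: srec_last.
by cbn [cbind]; rewrite vaddC_map rsE size_iota; congr (_, _); lia.
Qed.

End K0Product.

Section KProduct.
Variables (R : nzRingType) (n m : nat) (l1 l2 : R) (psi : 'cV[R]_(m.+1 * n.+1)).

Lemma mulmx_KmxE (k : 'I_m.+1) (i : 'I_n.+1) :
  (Kmx n m l1 l2 *m psi) (mxvec_index k i) 0 =
  (\sum_(b < m.+1) l2 ^+ ndist k b *: (K0mx n l1 *m psiblk psi b)) i 0.
Proof.
rewrite mxE summxE (reindex _ (curry_mxvec_bij _ _)) /=.
under [RHS]eq_bigr => b _ do rewrite !mxE mulr_sumr.
rewrite pair_bigA; apply: eq_bigr => -[b j] _ /=.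
rewrite !mxE !val_mxvec_index !divnMDl // !modnMDl !divn_small ?modn_small // !addn0.
by rewrite !inord_val mulrA.
Qed.

Lemma qvec_last : qvec l1 l2 psi m = 0.
Proof. by rewrite /qvec subnn. Qed.

Lemma qvecS k : (k < m)%N ->
  qvec l1 l2 psi k = l2 *: (qvec l1 l2 psi k.+1 + K0mx n l1 *m psiblk psi k.+1).
Proof. by move=> km; rewrite /qvec -(subnSK km) /= subKn. Qed.

Lemma mulmx_Kmx_pq (k : 'I_m.+1) (i : 'I_n.+1) :
  (Kmx n m l1 l2 *m psi) (mxvec_index k i) 0
  = (pvec l1 l2 psi k + qvec l1 l2 psi k) i 0.
Proof.
rewrite mulmx_KmxE (@distance_kernel_recE _ _ _ (fun b => K0mx n l1 *m psiblk psi b) m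
  (pvec l1 l2 psi) (qvec l1 l2 psi)) //.
- exact: qvec_last.
- exact: qvecS.
- by rewrite -ltnS.
Qed.

End KProduct.

Lemma map_enum_ord_iota (T : Type) p (F : 'I_p -> T) (G : nat -> T) :
  (forall i : 'I_p, G i = F i) -> [seq F i | i <- enum 'I_p] = [seq G j | j <- iota 0 p].
Proof. by move=> GF; rewrite -val_enum_ord -map_comp; apply: eq_map => i /=; rewrite GF. Qed.

Lemma flatten_map_iota_blocks (T : Type) (G : nat -> T) N M a :
  flatten [seq [seq G (k * N + j)%N | j <- iota 0 N] | k <- iota a M]
  = [seq G x | x <- iota (a * N) (M * N)].
Proof.
elim: M a => [|M IH] a //; rewrite [LHS]/= IH mulSn iotaD map_cat addnC; congr (_ ++ _).
by rewrite -[(a * N)%N]addn0 iotaDl -map_comp; apply: eq_map => j /=; rewrite addn0.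
Qed.

Section FastK.
Variables (R : nzRingType) (n m : nat) (l1 l2 : R) (psi : 'cV[R]_(m.+1 * n.+1)).

Lemma psiblocksE :
  psiblocks psi = [seq [seq psiblk psi k (inord j) 0 | j <- iota 0 n.+1] | k <- iota 0 m.+1].
Proof.
apply: map_enum_ord_iota => k; apply: esym; apply: map_enum_ord_iota => j.
by rewrite mxE !inord_val.
Qed.

Lemma colseq_mulmx_Kmx :
  colseq (Kmx n m l1 l2 *m psi) = flatten
    [seq [seq (pvec l1 l2 psi k + qvec l1 l2 psi k) (inord j) 0 | j <- iota 0 n.+1]
       | k <- iota 0 m.+1].
Proof.
pose G x := (Kmx n m l1 l2 *m psi)
  (mxvec_index (inord (x %/ n.+1) : 'I_m.+1) (inord (x %% n.+1) : 'I_n.+1)) 0.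
rewrite /colseq (@map_enum_ord_iota _ _ _ G); last first.
  move=> x; congr (_ _ 0); apply: ord_inj.
  by rewrite val_mxvec_index !inordK -?divn_eq ?ltn_pmod ?ltn_divLR.
rewrite -(flatten_map_iota_blocks G n.+1 m.+1 0); congr flatten.
apply/eq_in_map => k; rewrite mem_iota => /andP[_ km].
apply/eq_in_map => j; rewrite mem_iota => /andP[_ jn].
by rewrite /G divnMDl // modnMDl divn_small // modn_small // addn0 mulmx_Kmx_pq !inordK.
Qed.

Lemma fastK_psiblocksE : fastK n.+1 l1 l2 (psiblocks psi)
  = (colseq (Kmx n m l1 l2 *m psi), (m.+1 * (5 * n).+1 + 4 * m * n.+1 + m.+1 * n.+1)%N).
Proof.
pose u k j := (K0mx n l1 *m psiblk psi k) (inord j) 0.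
pose p k j := pvec l1 l2 psi k (inord j) 0.
pose q k j := qvec l1 l2 psi k (inord j) 0.
have pS k j : p k.+1 j = l2 * p k j + u k.+1 j by rewrite /p /u /= !mxE.
have ql j : q (0 + m)%N j = 0 by rewrite /q qvec_last mxE.
have qS k j : (k < 0 + m)%N -> q k j = l2 * (q k.+1 j + u k.+1 j).
  by move=> km; rewrite /q /u qvecS // !mxE.
have := qCE (iota 0 n.+1) ql qS; rewrite size_iota => qCE_iota.
rewrite /fastK psiblocksE (@mapC_map _ _ _ _ _ _ (fun k => [seq u k j | j <- iota 0 n.+1]) _
  (fun k => fastK0E l1 (psiblk psi k))).
cbn [cbind]; rewrite (@pCE _ _ _ _ _ p) // qCE_iota.
cbn [cbind]; rewrite vvaddC_map colseq_mulmx_Kmx; cbn [cbind cret].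
congr (flatten _, _); last by rewrite !size_iota; nia.
by apply: eq_map => k; apply: eq_map => j; rewrite mxE.
Qed.

End FastK.

Theorem mainTheorem2 :
  exists C : nat,
  forall (R : realType) (n m : nat) (h1 h2 eps : R),
    0 < h1 -> 0 < h2 -> 0 < eps ->
    let lam1 := expR (- (h1 / eps)) in
    let lam2 := expR (- (h2 / eps)) in
    forall psi : 'cV[R]_(m.+1 * n.+1),
      (* the k-th block of K psi equals p_k + q_k *)
      (forall (k : 'I_m.+1) (i : 'I_n.+1),
          (Kmx n m lam1 lam2 *m psi) (mxvec_index k i) 0
          = (pvec lam1 lam2 psi k + qvec lam1 lam2 psi k) i 0)
      (* each K0 psi_k is given by the linear-time recursion r + s *)
      /\ (forall (k : 'I_m.+1) (j : 'I_n.+1),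
          (K0mx n lam1 *m psiblk psi k) j 0
          = rrec lam1 (psiblk psi k) j + srec lam1 (psiblk psi k) j)
      (* the resulting algorithm computes K psi exactly with O(NM) operations *)
      /\ (fastK n.+1 lam1 lam2 (psiblocks psi)).1 = colseq (Kmx n m lam1 lam2 *m psi)
      /\ ((fastK n.+1 lam1 lam2 (psiblocks psi)).2 <= C * (n.+1 * m.+1))%N.
Proof.
exists 10%N => R n m h1 h2 eps _ _ _ lam1 lam2 psi.
rewrite fastK_psiblocksE /=; split; first exact: mulmx_Kmx_pq.
split; first by move=> k j; apply: mulmx_K0mx_rs.
by split=> //; nia.
Qed.
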